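(* Let $J$ be a nonempty basic cylinder in $M_a$ and $p\in J$. Then $$\mathrm{GS}(J,p)=\Big\{p+\sum_{i\in\Lambda(J)}\alpha_ie_i\in M_a:\ \alpha_i\in\mathbb R \text{ for all } i\in\Lambda(J)\Big\}.$$
   Context: Let $a=\{a_i\}$ be a sequence of positive reals with $\sum_i a_i^2<\infty$, $M_a=\{x\in\mathbb{R}^{\mathbb N}:\sum_i a_i^2x_i^2<\infty\}$ with inner product $\langle x,y\rangle_a=\sum_i a_i^2x_iy_i$ and norm $\|\cdot\|_a$. $e_i$ denotes the sequence with $1$ in position $i$ and $0$ elsewhere; infinite sums are $\|\cdot\|_a$-limits of partial sums. For nonempty $E\subset M_a$, $\Lambda(E)$ is the set of $i$ for which there exist $x\in E$ and $\alpha\ne0$ with $x+\alpha e_i\in E$. For $p\in E$, $\mathrm{GS}(E,p)=\{p+\sum_i\alpha_i(x_i-p)\in M_a: x_i\in E,\ \alpha_i\in\mathbb R\}$, the index running over a finite or countable subset of $\mathbb N$. A basic cylinder is a set $J=\prod_{i=1}^\infty J_i$ where, for some $n\in\mathbb N$ and pairwise disjoint $\Lambda_1,\dots,\Lambda_4\subset\{1,\dots,n\}$: $J_i=[0,p_{2i}]$ ($i\in\Lambda_1$), $[p_{1i},p_{2i}]$ ($i\in\Lambda_2$), $[p_{1i},1]$ ($i\in\Lambda_3$), $\{p_{1i}\}$ ($i\in\Lambda_4$), $[0,1]$ otherwise, with $0<p_{1i}<p_{2i}<1$ for $i\in\Lambda_1\cup\Lambda_2\cup\Lambda_3$ and $0\le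 p_{1i}\le1$ for $i\in\Lambda_4$. *)

From Stdlib Require Import Reals ClassicalEpsilon.
From Coquelicot Require Import Coquelicot.
Open Scope R_scope.

(* Real sequences x = (x_i)_{i in N}.  NOTE: indices start at 0 here
   (paper index i corresponds to Rocq index i-1). *)
Definition seqR := nat -> R.

Definition szero : seqR := fun _ => 0.
Definition sadd (x y : seqR) : seqR := fun i => x i + y i.
Definition ssub (x y : seqR) : seqR := fun i => x i - y i.
Definition sscal (c : R) (x : seqR) : seqR := fun i => c * x i.

Definition e (i : nat) : seqR := fun j => if Nat.eq_dec j i then 1 else 0.

Definition In_Ma (a : seqR) (x : seqR) : Prop :=
  ex_series (fun i => (a i)^2 * (x i)^2).

Definition norm_a (a : seqR) (x : seqR) : R :=
  sqrt (Series (fun i => (a i)^2 * (x i)^2)).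

Fixpoint psum (I : nat -> Prop) (c : nat -> seqR) (n : nat) : seqR :=
  match n with
  | O => szero
  | S m => sadd (psum I c m)
                 (if excluded_middle_informative (I m) then c m else szero)
  end.

Definition converges_a (a : seqR) (s : nat -> seqR) (z : seqR) : Prop :=
  In_Ma a z /\ is_lim_seq (fun n => norm_a a (ssub z (s n))) 0.

Definition Lambda (E : seqR -> Prop) (i : nat) : Prop :=
  exists (x : seqR) (alpha : R),
    E x /\ alpha <> 0 /\ E (sadd x (sscal alpha (e i))).

(* GS(E,p) = { p + sum_{i in S} alpha_i (x_i - p) in M_a : x_i in E, alpha_i in R },
   S a (finite or countable) subset of N. *)
Definition GS (a : seqR) (E : seqR -> Prop) (p : seqR) (y : seqR) : Prop :=
  exists (S : nat -> Prop) (alpha : nat -> R) (x : nat -> seqR) (z : seqR),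
    (forall i, S i -> E (x i)) /\
    converges_a a (psum S (fun i => sscal (alpha i) (ssub (x i) p))) z /\
    y = sadd p z /\ In_Ma a y.

Definition coord_span (a : seqR) (J : seqR -> Prop) (p : seqR) (y : seqR) : Prop :=
  exists (alpha : nat -> R) (z : seqR),
    converges_a a (psum (Lambda J) (fun i => sscal (alpha i) (e i))) z /\
    y = sadd p z /\ In_Ma a y.

Definition basic_cylinder (J : seqR -> Prop) : Prop :=
  exists (n : nat) (L1 L2 L3 L4 : nat -> Prop) (p1 p2 : seqR),
    (forall i, (L1 i \/ L2 i \/ L3 i \/ L4 i) -> (i < n)%nat) /\
    (forall i, L1 i -> L2 i -> False) /\ (forall i, L1 i -> L3 i -> False) /\
    (forall i, L1 i -> L4 i -> False) /\ (forall i, L2 i -> L3 i -> False) /\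
    (forall i, L2 i -> L4 i -> False) /\ (forall i, L3 i -> L4 i -> False) /\
    (forall i, (L1 i \/ L2 i \/ L3 i) -> 0 < p1 i /\ p1 i < p2 i /\ p2 i < 1) /\
    (forall i, L4 i -> 0 <= p1 i <= 1) /\
    (forall x, J x <->
       forall i,
         (L1 i -> 0 <= x i <= p2 i) /\
         (L2 i -> p1 i <= x i <= p2 i) /\
         (L3 i -> p1 i <= x i <= 1) /\
         (L4 i -> x i = p1 i) /\
         (~ L1 i -> ~ L2 i -> ~ L3 i -> ~ L4 i -> 0 <= x i <= 1)).

From Stdlib Require Import Reals Lra Lia Arith Classical ClassicalEpsilon FunctionalExtensionality.
From Coquelicot Require Import Coquelicot.
Open Scope R_scope.

(* A basic cylinder is a product of intervals, so it is closed under exchanging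
   a single coordinate between two of its points.  Hence an index i lies outside
   Lambda(J) exactly when the i-th coordinate is constant on J; for i in
   Lambda(J) the point of J that agrees with p off i gives e_i as a multiple of
   x - p, so every p + sum alpha_i e_i lies in GS(J,p).  Conversely, every
   partial sum of a series p + sum alpha_k (x_k - p) vanishes at the coordinates
   outside Lambda(J), and so does its ||.||_a-limit because the coordinate
   functionals are continuous (|a_i x_i| <= ||x||_a, a_i > 0); such a limit is
   the limit of its own truncations, i.e. of partial sums of its expansion in
   the e_i, i in Lambda(J). *)

Definition update (p : seqR) (i : nat) (v : R) : seqR :=
  fun j => if Nat.eq_dec j i then v else p j.

Definition truncate (n : nat) (z : seqR) : seqR :=
  fun j => if lt_dec j n then z j else 0.

Lemma update_eq_add_basis (p : seqR) (i : nat) (v : R) :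
  update p i v = sadd p (sscal (v - p i) (e i)).
Proof.
  apply functional_extensionality; intros j; unfold update, sadd, sscal, e.
  destruct Nat.eq_dec as [->|]; ring.
Qed.

Lemma psum_ext (I : nat -> Prop) (c d : nat -> seqR) (n : nat) :
  (forall i, I i -> c i = d i) -> psum I c n = psum I d n.
Proof.
  intros Hcd; induction n as [|n IH]; [reflexivity|].
  simpl; rewrite IH; destruct excluded_middle_informative; [rewrite Hcd|]; auto.
Qed.

Lemma psum_coord_eq0 (I : nat -> Prop) (c : nat -> seqR) (n i : nat) :
  (forall k, I k -> c k i = 0) -> psum I c n i = 0.
Proof.
  intros Hc; induction n as [|n IH]; [reflexivity|].
  simpl; unfold sadd; rewrite IH.
  destruct excluded_middle_informative as [Hn|].
  - rewrite (Hc n Hn); ring.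
  - unfold szero; ring.
Qed.

Lemma psum_basis_truncate (I : nat -> Prop) (z : seqR) (n : nat) :
  (forall i, ~ I i -> z i = 0) ->
  psum I (fun i => sscal (z i) (e i)) n = truncate n z.
Proof.
  intros Hz; induction n as [|n IH].
  - apply functional_extensionality; intros j; unfold truncate.
    destruct lt_dec; [lia | reflexivity].
  - simpl; rewrite IH; apply functional_extensionality; intros j.
    unfold truncate, sadd, sscal, szero, e.
    destruct excluded_middle_informative as [Hn|Hn];
      destruct (lt_dec j n), (lt_dec j (S n)), (Nat.eq_dec j n); subst;
      try lia; try ring.
    rewrite (Hz _ Hn); ring.
Qed.

Lemma Series_ge_term (f : nat -> R) (i : nat) :
  ex_series f -> (forall j, 0 <= f j) -> f i <= Series f.
Proof.
  intros Hf Hpos.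
  assert (Hsum : Un_cv (fun n => sum_f_R0 f n) (Series f))
    by (apply is_series_Reals, Series_correct, Hf).
  apply Rle_trans with (sum_f_R0 f i); [|apply sum_incr; assumption].
  destruct i as [|i]; simpl; [lra|].
  pose proof (cond_pos_sum f i Hpos); lra.
Qed.

Lemma Series_tail_lim (f : nat -> R) :
  ex_series f ->
  is_lim_seq (fun n => Series (fun j => if lt_dec j n then 0 else f j)) 0.
Proof.
  intros Hf; apply is_lim_seq_incr_1.
  apply is_lim_seq_ext with (fun m => Series f - sum_f_R0 f m).
  - intros m.
    rewrite (Series_incr_n_aux (fun j => if lt_dec j (S m) then 0 else f j) (S m))
      by (intros k Hk; destruct lt_dec; [reflexivity | lia]).
    rewrite (Series_incr_n f (S m)) by (lia || exact Hf); simpl pred.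
    rewrite (Series_ext (fun k => if lt_dec (S m + k) (S m) then 0 else f (S m + k)%nat)
               (fun k => f (S m + k)%nat)); [ring|].
    intros k; destruct lt_dec; [lia | reflexivity].
  - replace (Finite 0) with (Finite (Series f - Series f)) by (f_equal; ring).
    apply is_lim_seq_minus'; [apply is_lim_seq_const|].
    apply is_lim_seq_ext with (sum_n f); [intros n; apply sum_n_Reals|].
    apply Series_correct, Hf.
Qed.

Section WeightedSpace.

Variable a : seqR.

Lemma In_Ma_zero : In_Ma a szero.
Proof.
  exists 0; apply is_series_Reals; intros eps Heps; exists O; intros n _.
  rewrite (sum_eq_R0 _ n) by (intros k _; unfold szero; ring).
  unfold Rdist; rewrite Rminus_0_r, Rabs_R0; lra.
Qed.

Lemma In_Ma_add (u v : seqR) : In_Ma a u -> In_Ma a v -> In_Ma a (sadd u v).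
Proof.
  intros Hu Hv.
  apply (@ex_series_le R_AbsRing R_CompleteNormedModule _
           (fun j => 2 * (a j ^ 2 * u j ^ 2) + 2 * (a j ^ 2 * v j ^ 2))).
  - intros j; unfold sadd, norm; simpl; unfold abs; simpl.
    pose proof (pow2_ge_0 (a j)); pose proof (pow2_ge_0 (u j - v j)).
    rewrite Rabs_pos_eq; [nra | apply Rmult_le_pos; [lra | apply pow2_ge_0]].
  - apply (@ex_series_plus R_AbsRing R_NormedModule);
      apply (@ex_series_scal_l R_AbsRing R_NormedModule); assumption.
Qed.

Lemma In_Ma_scal (c : R) (u : seqR) : In_Ma a u -> In_Ma a (sscal c u).
Proof.
  intros Hu; apply (@ex_series_ext R_AbsRing R_NormedModule (fun j => c ^ 2 * (a j ^ 2 * u j ^ 2))).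
  - intros j; unfold sscal; simpl; ring.
  - apply (@ex_series_scal_l R_AbsRing R_NormedModule), Hu.
Qed.

Lemma In_Ma_sub (u v : seqR) : In_Ma a u -> In_Ma a v -> In_Ma a (ssub u v).
Proof.
  intros Hu Hv.
  replace (ssub u v) with (sadd u (sscal (-1) v)).
  - apply In_Ma_add; [|apply In_Ma_scal]; assumption.
  - apply functional_extensionality; intros j; unfold ssub, sadd, sscal; ring.
Qed.

Lemma In_Ma_psum (I : nat -> Prop) (c : nat -> seqR) (n : nat) :
  (forall i, I i -> In_Ma a (c i)) -> In_Ma a (psum I c n).
Proof.
  intros Hc; induction n as [|n IH]; [exact In_Ma_zero|].
  apply In_Ma_add; [exact IH|].
  destruct excluded_middle_informative; [apply Hc; assumption | exact In_Ma_zero].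
Qed.

Lemma In_Ma_bounded (u : seqR) (C : R) :
  ex_series (fun i => (a i)^2) -> (forall j, Rabs (u j) <= C) -> In_Ma a u.
Proof.
  intros Ha Hu.
  apply (@ex_series_le R_AbsRing R_CompleteNormedModule _ (fun j => C ^ 2 * a j ^ 2)).
  - intros j; unfold norm; simpl; unfold abs; simpl.
    assert (Hsq : u j ^ 2 <= C ^ 2).
    { rewrite <- (pow2_abs (u j)); apply pow_incr; split; [apply Rabs_pos | apply Hu]. }
    pose proof (pow2_ge_0 (a j)); pose proof (pow2_ge_0 (u j)).
    rewrite Rabs_pos_eq; nra.
  - apply (@ex_series_scal_l R_AbsRing R_NormedModule), Ha.
Qed.

Lemma Rabs_coord_le_norm_a (x : seqR) (i : nat) :
  In_Ma a x -> Rabs (a i * x i) <= norm_a a x.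
Proof.
  intros Hx; unfold norm_a; rewrite <- sqrt_Rsqr_abs; apply sqrt_le_1_alt.
  replace (Rsqr (a i * x i)) with (a i ^ 2 * x i ^ 2) by (unfold Rsqr; ring).
  apply (Series_ge_term (fun j => a j ^ 2 * x j ^ 2)); [exact Hx|].
  intros j; apply Rmult_le_pos; apply pow2_ge_0.
Qed.

(* [In_Ma a (s n)] is needed because [norm_a] is junk outside M_a: the
   [Series] of a divergent series is 0. *)
Lemma converges_a_coord_eq0 (s : nat -> seqR) (z : seqR) (i : nat) :
  a i <> 0 -> (forall n, In_Ma a (s n)) -> converges_a a s z ->
  (forall n, s n i = 0) -> z i = 0.
Proof.
  intros Hai Hs [Hz Hlim] Hsi.
  assert (Hle : forall n, Rabs (a i * z i) <= norm_a a (ssub z (s n))).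
  { intros n; replace (z i) with (ssub z (s n) i) by (unfold ssub; rewrite Hsi; ring).
    apply Rabs_coord_le_norm_a, In_Ma_sub; auto. }
  pose proof (is_lim_seq_le _ _ _ _ Hle (is_lim_seq_const _) Hlim) as Hbar.
  simpl in Hbar; pose proof (Rabs_pos (a i * z i)).
  assert (Hprod : a i * z i = 0) by (apply Rabs_eq_0; lra).
  destruct (Rmult_integral _ _ Hprod); tauto.
Qed.

Lemma converges_a_truncate (z : seqR) :
  In_Ma a z -> converges_a a (fun n => truncate n z) z.
Proof.
  intros Hz; split; [exact Hz|].
  apply is_lim_seq_ext with
    (fun n => sqrt (Series (fun j => if lt_dec j n then 0 else a j ^ 2 * z j ^ 2))).
  - intros n; unfold norm_a; f_equal; apply Series_ext; intros j.
    unfold ssub, truncate; destruct lt_dec; ring.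
  - replace (Finite 0) with (Finite (sqrt 0)) by (rewrite sqrt_0; reflexivity).
    apply is_lim_seq_continuous.
    + apply continuity_pt_sqrt; lra.
    + apply Series_tail_lim, Hz.
Qed.

End WeightedSpace.

Definition coord_exchange_closed (J : seqR -> Prop) : Prop :=
  forall u p i, J u -> J p -> J (update p i (u i)).

Section CoordExchange.

Variables (J : seqR -> Prop) (p : seqR).
Hypotheses (hJ : coord_exchange_closed J) (hp : J p).

Lemma not_Lambda_coord_const (i : nat) (x : seqR) :
  ~ Lambda J i -> J x -> x i = p i.
Proof.
  intros HnL Hx; apply NNPP; intros Hne; apply HnL.
  exists p, (x i - p i); repeat split; [exact hp | lra |].
  rewrite <- update_eq_add_basis; apply hJ; assumption.
Qed.

Lemma Lambda_update_witness (i : nat) :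
  Lambda J i -> exists v, v <> p i /\ J (update p i v).
Proof.
  intros (x & alpha & Hx & Halpha & Hxa).
  assert (Hxa_i : sadd x (sscal alpha (e i)) i = x i + alpha).
  { unfold sadd, sscal, e; destruct Nat.eq_dec; [ring | lia]. }
  destruct (Req_dec (x i) (p i)) as [Heq|Hne].
  - exists (x i + alpha); split; [lra|]; rewrite <- Hxa_i; apply hJ; assumption.
  - exists (x i); split; [exact Hne | apply hJ; assumption].
Qed.

Lemma coord_span_sub_GS (a y : seqR) : coord_span a J p y -> GS a J p y.
Proof.
  intros (alpha & z & Hc & Hy & HMy).
  set (P := fun i w => J w /\ w i <> p i /\ w = update p i (w i)).
  assert (HP : forall i, Lambda J i -> P i (epsilon (inhabits p) (P i))).
  { intros i Hi; apply epsilon_spec.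
    destruct (Lambda_update_witness i Hi) as (v & Hv & HJv).
    assert (Hvi : update p i v i = v)
      by (unfold update; destruct Nat.eq_dec; [reflexivity | lia]).
    exists (update p i v); unfold P; rewrite Hvi; auto. }
  set (w := fun i => epsilon (inhabits p) (P i)).
  exists (Lambda J), (fun i => alpha i / (w i i - p i)), w, z.
  split; [intros i Hi; apply (HP i Hi)|].
  split; [|split; assumption].
  unfold converges_a in *.
  replace (psum _ _) with (psum (Lambda J) (fun i => sscal (alpha i) (e i))); [exact Hc|].
  apply functional_extensionality; intros n; apply psum_ext; intros i Hi.
  destruct (HP i Hi) as (_ & Hne & Hw); fold (w i) in Hne, Hw.
  set (v := w i i) in *; rewrite Hw, update_eq_add_basis.
  apply functional_extensionality; intros j; unfold sscal, ssub, sadd, e.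
  destruct Nat.eq_dec; field; lra.
Qed.

Lemma GS_sub_coord_span (a y : seqR) :
  (forall i, a i <> 0) -> (forall x, J x -> In_Ma a x) ->
  GS a J p y -> coord_span a J p y.
Proof.
  intros Ha HJa (S & alpha & x & z & HS & Hc & Hy & HMy).
  set (s := psum S (fun k => sscal (alpha k) (ssub (x k) p))).
  assert (Hs : forall n, In_Ma a (s n)).
  { intros n; apply In_Ma_psum; intros k Hk.
    apply In_Ma_scal, In_Ma_sub; apply HJa; auto. }
  assert (Hz : forall i, ~ Lambda J i -> z i = 0).
  { intros i HnL; apply (converges_a_coord_eq0 a s z i (Ha i) Hs Hc).
    intros n; apply psum_coord_eq0; intros k Hk; unfold sscal, ssub.
    rewrite (not_Lambda_coord_const i (x k) HnL (HS k Hk)); ring. }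
  exists z, z; split; [|split; assumption].
  replace (psum _ _) with (fun n => truncate n z).
  - apply converges_a_truncate, Hc.
  - apply functional_extensionality; intros n; symmetry; apply psum_basis_truncate, Hz.
Qed.

End CoordExchange.

Lemma basic_cylinder_coord_exchange (J : seqR -> Prop) :
  basic_cylinder J -> coord_exchange_closed J.
Proof.
  intros (n & L1 & L2 & L3 & L4 & p1 & p2 & _ & _ & _ & _ & _ & _ & _ & _ & _ & HJ).
  intros u p i Hu Hp; apply HJ; intros j; unfold update.
  destruct (Nat.eq_dec j i) as [->|].
  - exact (proj1 (HJ u) Hu i).
  - exact (proj1 (HJ p) Hp j).
Qed.

Lemma basic_cylinder_unit_cube (J : seqR -> Prop) (x : seqR) :
  basic_cylinder J -> J x -> forall j, 0 <= x j <= 1.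
Proof.
  intros (n & L1 & L2 & L3 & L4 & p1 & p2 & _ & _ & _ & _ & _ & _ & _ & H123 & H4 & HJ).
  intros Hx j; destruct (proj1 (HJ x) Hx j) as (A1 & A2 & A3 & A4 & A5).
  destruct (classic (L1 j)) as [h1|h1];
    [pose proof (H123 j (or_introl h1)); specialize (A1 h1); lra|].
  destruct (classic (L2 j)) as [h2|h2];
    [pose proof (H123 j (or_intror (or_introl h2))); specialize (A2 h2); lra|].
  destruct (classic (L3 j)) as [h3|h3];
    [pose proof (H123 j (or_intror (or_intror h3))); specialize (A3 h3); lra|].
  destruct (classic (L4 j)) as [h4|h4];
    [pose proof (H4 j h4); specialize (A4 h4); lra|].
  exact (A5 h1 h2 h3 h4).
Qed.

Lemma basic_cylinder_In_Ma (a : seqR) (J : seqR -> Prop) (x : seqR) :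
  ex_series (fun i => (a i)^2) -> basic_cylinder J -> J x -> In_Ma a x.
Proof.
  intros Ha hJ Hx; apply (In_Ma_bounded a x 1 Ha); intros j.
  pose proof (basic_cylinder_unit_cube J x hJ Hx j); apply Rabs_le; lra.
Qed.

Theorem theorem3p5 (a : seqR)
  (ha_pos : forall i, 0 < a i)
  (ha_sq : ex_series (fun i => (a i)^2))
  (J : seqR -> Prop) (hJ : basic_cylinder J) (hJne : exists x, J x)
  (p : seqR) (hp : J p) :
  forall y : seqR, GS a J p y <-> coord_span a J p y.
Proof.
  intros y; pose proof (basic_cylinder_coord_exchange J hJ) as hJx; split.
  - apply GS_sub_coord_span; auto.
    + intros i; pose proof (ha_pos i); lra.
    + intros x; apply basic_cylinder_In_Ma; assumption.
  - apply coord_span_sub_GS; assumption.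
Qed.
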